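(* Let $(i,k)\in\mathcal I_1$. Then $F_{st}F_{\ge(i,k)}=0$ for every $(s,t)\in\mathcal I_1$ with $(s,t)\succeq(i,k)$; equivalently, $F_{st}F_{>(i,k)}=0$ for every $(s,t)\in\mathcal I_1$ with $(s,t)\succ(i,k)$.
   Context: Let $m,n\ge 1$, let $q$ be an indeterminate, and let indices range over $[1,m+n]$. Put $q_i=q$ if $i\le m$ and $q_i=q^{-1}$ if $i>m$. Let $\mathcal I_0=\{(i,j):1\le i<j\le m \text{ or } m+1\le i<j\le m+n\}$, $\mathcal I_1=\{(i,j):1\le i\le m<j\le m+n\}$. The quantum supergroup $U_q=U_q(\mathfrak{gl}(m|n))$ is the associative $\mathbb C(q)$-superalgebra generated by $K_j^{\pm1}$ ($j\in[1,m+n]$) and $E_{i,i+1},F_{i,i+1}$ ($1\le i<m+n$), where $K_j^{\pm1}$ and $E_{i,i+1},F_{i,i+1}$ for $i\ne m$ are even and $E_{m,m+1},F_{m,m+1}$ are odd, subject to: $K_iK_j=K_jK_i$, $K_iK_i^{-1}=1$; $K_iE_{j,j+1}K_i^{-1}=q_i^{\delta_{ij}-\delta_{i,j+1}}E_{j,j+1}$, $K_iF_{j,j+1}K_i^{-1}=q_i^{-(\delta_{ij}-\delta_{i,j+1})}F_{j,j+1}$; $[E_{i,i+1},F_{j,j+1}]=\delta_{ij}\frac{K_iK_{i+1}^{-1}-K_i^{-1}K_{i+1}}{q_i-q_i^{-1}}$; $E_{m,m+1}^2=F_{m,m+1}^2=0$; $E_{i,i+1}E_{j,j+1}=E_{j,j+1}E_{i,i+1}$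 and $F_{i,i+1}F_{j,j+1}=F_{j,j+1}F_{i,i+1}$ for $|i-j|>1$; for $|i-j|=1$, $i\neq m$, and $X\in\{E,F\}$: $X_{i,i+1}^2X_{j,j+1}-(q+q^{-1})X_{i,i+1}X_{j,j+1}X_{i,i+1}+X_{j,j+1}X_{i,i+1}^2=0$; and $[E_{m-1,m+2},E_{m,m+1}]=[F_{m-1,m+2},F_{m,m+1}]=0$. Here for homogeneous $x,y$, $[x,y]=xy-(-1)^{\bar x\bar y}yx$. For $i<j$ with $j>i+1$, $E_{ij}=E_{ic}E_{cj}-q_c^{-1}E_{cj}E_{ic}$ and $F_{ij}=-q_cF_{ic}F_{cj}+F_{cj}F_{ic}$ for $i<c<j$ (independent of $c$); $E_{ij},F_{ij}$ are odd iff $(i,j)\in\mathcal I_1$. Order on $\mathcal I_1$: $(i,j)\prec(s,t)$ iff $j>t$, or $j=t$ and $i<s$. For $I\subseteq\mathcal I_1$, $F_I$ is the product of the $F_{ij}$, $(i,j)\in I$, taken in increasing $\prec$-order ($F_\emptyset=1$). For $(i,j)\in\mathcal I_1$, $F_{\ge(i,j)}$, $F_{>(i,j)}$, $F_{\le(i,j)}$, $F_{<(i,j)}$ denote $F_I$ for $I=\{(s,t)\in\mathcal I_1:(s,t)\succeq(i,j)\}$, $\{(s,t):(s,t)\succ(i,j)\}$, $\{(s,t):(s,t)\preceq(i,j)\}$, $\{(s,t):(s,t)\prec(i,j)\}$ respectively. *)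

From HB Require Import structures.
From mathcomp Require Import all_boot all_order all_algebra all_field.
Set Implicit Arguments. Unset Strict Implicit. Unset Printing Implicit Defensive.
Import Order.TTheory GRing.Theory Num.Theory.
Local Open Scope ring_scope.

(* Base field C(q): rational functions in an indeterminate q.
   (complex numbers are modelled by the algebraic complex numbers algC) *)
Definition Cq : fieldType := {fraction {poly algC}}.
Definition qq : Cq := FracField.tofrac ('X : {poly algC}).

Definition qi (m i : nat) : Cq := if (i <= m)%N then qq else qq^-1.

Section Uq.
Variables (m n : nat) (A : algType Cq).
(* generators: K j = K_j, Ki j = K_j^{-1}, E i = E_{i,i+1}, F i = F_{i,i+1} *)
Variables (K Ki E F : nat -> A).

(* E_{i,i+d+1}, defined with c = j-1 :
   E_{ij} = E_{ic} E_{cj} - q_c^{-1} E_{cj} E_{ic} *)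
Fixpoint Eaux (i d : nat) : A :=
  match d with
  | 0 => E i
  | d'.+1 => let c := (i + d'.+1)%N in
             Eaux i d' * E c - (qi m c)^-1 *: (E c * Eaux i d')
  end.
Fixpoint Faux (i d : nat) : A :=
  match d with
  | 0 => F i
  | d'.+1 => let c := (i + d'.+1)%N in
             - (qi m c *: (Faux i d' * F c)) + F c * Faux i d'
  end.
Definition Eij (i j : nat) : A := Eaux i (j - i - 1).
Definition Fij (i j : nat) : A := Faux i (j - i - 1).

Definition idx (j : nat) : bool := (1 <= j <= m + n)%N.
Definition sidx (i : nat) : bool := (1 <= i < m + n)%N.
Definition dist (i j : nat) : nat := (i - j + (j - i))%N.

(* Defining relations of U_q(gl(m|n)) for the images of the generators. *)
Definition Uq_rels : Prop :=
  (forall i j, idx i -> idx j -> K i * K j = K j * K i) /\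
      (forall i, idx i -> K i * Ki i = 1 /\ Ki i * K i = 1) /\
      (forall i j, idx i -> sidx j ->
         K i * E j * Ki i = qi m i ^ ((i == j)%:Z - (i == j.+1)%:Z) *: E j /\
         K i * F j * Ki i = qi m i ^ (- ((i == j)%:Z - (i == j.+1)%:Z)) *: F j) /\
      (forall i j, sidx i -> sidx j ->
         E i * F j - (if (i == m) && (j == m) then -1 else 1) *: (F j * E i) =
         (if i == j then (qi m i - (qi m i)^-1)^-1 *:
                           (K i * Ki i.+1 - Ki i * K i.+1) else 0)) /\
      (E m * E m = 0 /\ F m * F m = 0) /\
      (forall i j, sidx i -> sidx j -> (1 < dist i j)%N ->
         E i * E j = E j * E i /\ F i * F j = F j * F i) /\
      (forall i j, sidx i -> sidx j -> dist i j = 1%N -> i != m ->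
         E i * E i * E j - (qq + qq^-1) *: (E i * E j * E i) + E j * E i * E i = 0 /\
         F i * F i * F j - (qq + qq^-1) *: (F i * F j * F i) + F j * F i * F i = 0) /\
      ((1 < m)%N -> (1 < n)%N ->
         Eij m.-1 m.+2 * E m + E m * Eij m.-1 m.+2 = 0 /\
         Fij m.-1 m.+2 * F m + F m * Fij m.-1 m.+2 = 0).

Definition I1 (p : nat * nat) : bool := (1 <= p.1 <= m)%N && (m < p.2 <= m + n)%N.
Definition prec (p r : nat * nat) : bool :=
  (r.2 < p.2)%N || ((p.2 == r.2) && (p.1 < r.1)%N).
Definition preceq (p r : nat * nat) : bool := (p == r) || prec p r.
(* I_1 listed in increasing prec-order *)
Definition I1seq : seq (nat * nat) :=
  flatten [seq [seq (i, j) | i <- iota 1 m] | j <- rev (iota m.+1 n)].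
Definition Fprod (P : pred (nat * nat)) : A :=
  \prod_(p <- I1seq | P p) Fij p.1 p.2.
Definition Fge (p : nat * nat) : A := Fprod (fun r => preceq p r).
Definition Fgt (p : nat * nat) : A := Fprod (fun r => prec p r).
End Uq.

(* The odd root vectors F_ij (i <= m < j) square to zero, and for (i,k) < (s,t) the
   product F_st F_ik lies in the left ideal generated by F_st and, when t < k, by F_it:
   according to the relative position of the two pairs, F_st and F_ik q-commute, or
   anticommute, or satisfy F_st F_ik + F_ik F_st = (q - q^-1) F_it F_sk with F_it F_sk
   = - F_sk F_it.  The factors of F_{>=(i,k)} are indexed by an upward-closed set, in
   increasing order, so by induction along the product F_st is killed either by the
   first factor (when it is F_st itself) or by the remaining ones.
   The commutation relations follow by induction on the length of the root vectors,
   writing F_ij as a q-commutator of F_i with F_{i+1,j} or of F_{i,j-1} with F_{j-1};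
   at the bottom sit the quantum Serre relations, F_m^2 = 0 and the odd relation
   [F_{m-1,m+2}, F_m] = 0. *)

From mathcomp Require Import all_boot all_algebra all_field.
From mathcomp Require Import ring zify.
Import GRing.Theory.
Local Open Scope ring_scope.
Set Implicit Arguments. Unset Strict Implicit. Unset Printing Implicit Defensive.

Section NoncommutativeNormalization.
Variables (K : fieldType) (A : algType K).

Inductive nexpr : Type :=
  | NAtom of nat | NZero | NOne
  | NAdd of nexpr & nexpr | NOpp of nexpr | NMul of nexpr & nexpr
  | NScale of K & nexpr.

Fixpoint nexpr_eval (env : seq A) (e : nexpr) : A :=
  match e with
  | NAtom i => env`_i
  | NZero => 0
  | NOne => 1
  | NAdd e1 e2 => nexpr_eval env e1 + nexpr_eval env e2
  | NOpp e1 => - nexpr_eval env e1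
  | NMul e1 e2 => nexpr_eval env e1 * nexpr_eval env e2
  | NScale a e1 => a *: nexpr_eval env e1
  end.

(* A noncommutative polynomial: a list of coefficients attached to words in the atoms. *)
Definition npoly := seq (K * seq nat).

Definition word_eval (env : seq A) (w : seq nat) : A := \prod_(i <- w) env`_i.
Definition npoly_eval (env : seq A) (p : npoly) : A :=
  \sum_(c <- p) c.1 *: word_eval env c.2.

Definition npoly_scale (a : K) (p : npoly) : npoly := [seq (a * c.1, c.2) | c <- p].
Definition npoly_mul (p r : npoly) : npoly :=
  flatten [seq [seq (c.1 * d.1, c.2 ++ d.2) | d <- r] | c <- p].

Fixpoint nexpr_norm (e : nexpr) : npoly :=
  match e with
  | NAtom i => [:: (1, [:: i])]
  | NZero => [::]
  | NOne => [:: (1, [::])]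
  | NAdd e1 e2 => nexpr_norm e1 ++ nexpr_norm e2
  | NOpp e1 => npoly_scale (-1) (nexpr_norm e1)
  | NMul e1 e2 => npoly_mul (nexpr_norm e1) (nexpr_norm e2)
  | NScale a e1 => npoly_scale a (nexpr_norm e1)
  end.

Fixpoint word_eqb (w1 w2 : seq nat) : bool :=
  match w1, w2 with
  | [::], [::] => true
  | i :: w1', j :: w2' => Nat.eqb i j && word_eqb w1' w2'
  | _, _ => false
  end.

Fixpoint npoly_insert (c : K * seq nat) (p : npoly) : npoly :=
  match p with
  | [::] => [:: c]
  | d :: p' => if word_eqb c.2 d.2 then (c.1 + d.1, d.2) :: p' else d :: npoly_insert c p'
  end.

Definition npoly_collect (p : npoly) : npoly := foldr npoly_insert [::] p.

Definition npoly_zero (p : npoly) : Prop := foldr (fun c P => c.1 = 0 /\ P) True p.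

Lemma word_evalA env w1 w2 : word_eval env (w1 ++ w2) = word_eval env w1 * word_eval env w2.
Proof. exact: big_cat. Qed.

Lemma npoly_eval_cat env p r : npoly_eval env (p ++ r) = npoly_eval env p + npoly_eval env r.
Proof. exact: big_cat. Qed.

Lemma npoly_eval_scale env a p : npoly_eval env (npoly_scale a p) = a *: npoly_eval env p.
Proof. by rewrite /npoly_eval big_map scaler_sumr; apply: eq_bigr => c _; rewrite scalerA. Qed.

Lemma npoly_eval_mul env p r :
  npoly_eval env (npoly_mul p r) = npoly_eval env p * npoly_eval env r.
Proof.
rewrite /npoly_eval big_flatten big_map mulr_suml; apply: eq_bigr => c _.
rewrite big_map mulr_sumr; apply: eq_bigr => d _.
by rewrite word_evalA -scalerAl -scalerAr scalerA.
Qed.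

Lemma nexpr_normE env e : npoly_eval env (nexpr_norm e) = nexpr_eval env e.
Proof.
elim: e => [i||| e1 IH1 e2 IH2| e IH| e1 IH1 e2 IH2| a e IH] /=.
- by rewrite /npoly_eval big_seq1 /word_eval big_seq1 scale1r.
- by rewrite /npoly_eval big_nil.
- by rewrite /npoly_eval big_seq1 /word_eval big_nil scale1r.
- by rewrite npoly_eval_cat IH1 IH2.
- by rewrite npoly_eval_scale IH scaleN1r.
- by rewrite npoly_eval_mul IH1 IH2.
- by rewrite npoly_eval_scale IH.
Qed.

Lemma word_eqbP w1 w2 : word_eqb w1 w2 -> w1 = w2.
Proof.
by elim: w1 w2 => [|i w1 IH] [|j w2] //= /andP[/PeanoNat.Nat.eqb_eq -> /IH ->].
Qed.

Lemma npoly_eval_insert env c p :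
  npoly_eval env (npoly_insert c p) = c.1 *: word_eval env c.2 + npoly_eval env p.
Proof.
rewrite /npoly_eval; elim: p => [|d p IH] /=; first by rewrite big_seq1 big_nil addr0.
case: ifP => [/word_eqbP ->|_]; first by rewrite !big_cons scalerDl addrA.
by rewrite !big_cons IH addrCA.
Qed.

Lemma npoly_eval_collect env p : npoly_eval env (npoly_collect p) = npoly_eval env p.
Proof.
elim: p => [|c p IH] //=.
by rewrite npoly_eval_insert IH {2}/npoly_eval big_cons.
Qed.

Lemma npoly_zero_eval env p : npoly_zero p -> npoly_eval env p = 0.
Proof.
elim: p => [|c p IH] /=; first by rewrite /npoly_eval big_nil.
by case=> c0 /IH; rewrite /npoly_eval big_cons c0 scale0r add0r.
Qed.

Lemma nexpr_eq env e1 e2 :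
  npoly_zero (npoly_collect (nexpr_norm (NAdd e1 (NOpp e2)))) ->
  nexpr_eval env e1 = nexpr_eval env e2.
Proof.
move=> /(npoly_zero_eval env); rewrite npoly_eval_collect nexpr_normE /=.
exact: subr0_eq.
Qed.
End NoncommutativeNormalization.

Ltac nc_index x env :=
  lazymatch env with
  | x :: _ => constr:(0%N)
  | _ :: ?env' => let i := nc_index x env' in constr:(S i)
  end.

Ltac nc_mem x env :=
  lazymatch env with
  | nil => constr:(false)
  | x :: _ => constr:(true)
  | _ :: ?env' => nc_mem x env'
  end.

Ltac nc_atoms t env :=
  lazymatch t with
  | (?a + ?b)%R => let env := nc_atoms a env in nc_atoms b env
  | (- ?a)%R => nc_atoms a env
  | (?a * ?b)%R => let env := nc_atoms a env in nc_atoms b env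
  | (_ *: ?a)%R => nc_atoms a env
  | 0%R => env
  | 1%R => env
  | _ => let known := nc_mem t env in
         lazymatch known with true => env | false => constr:(t :: env) end
  end.

Ltac nc_reify K t env :=
  lazymatch t with
  | (?a + ?b)%R =>
      let x := nc_reify K a env in let y := nc_reify K b env in constr:(@NAdd K x y)
  | (- ?a)%R => let x := nc_reify K a env in constr:(@NOpp K x)
  | (?a * ?b)%R =>
      let x := nc_reify K a env in let y := nc_reify K b env in constr:(@NMul K x y)
  | (?c *: ?a)%R => let x := nc_reify K a env in constr:(@NScale K c x)
  | 0%R => constr:(@NZero K)
  | 1%R => constr:(@NOne K)
  | _ => let i := nc_index t env in constr:(@NAtom K i)
  end.

(* Reduces an identity in an algebra over a field to identities between the
   coefficients of its normal form in the free algebra on its atoms. *)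
Ltac nc_reflect :=
  lazymatch goal with
  | A : algType ?K |- @eq ?T ?l ?r =>
      let env := nc_atoms l (@nil T) in
      let env := nc_atoms r env in
      let el := nc_reify K l env in
      let er := nc_reify K r env in
      apply: (@nexpr_eq K A env el er);
      cbv [npoly_zero npoly_collect npoly_insert word_eqb Nat.eqb andb nexpr_norm
           npoly_mul npoly_scale flatten foldr map cat fst snd]
  end.

Ltac nc_ring := nc_reflect; repeat split; ring.
Ltac nc_field := nc_reflect; repeat split; field.

Section QCommutators.
Variables (K : fieldType) (A : algType K).
Implicit Types (a c e k s : K) (f g b y X Y Z G H : A).

Definition qcomm c X Y : A := Y * X - c *: (X * Y).
Definition serre s f X : A := f * f * X - s *: (f * X * f) + X * f * f.
Definition qcommutes e X Y : Prop := X * Y = e *: (Y * X).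

Let zeroE := (mulr0, mul0r, scaler0, addr0, add0r, oppr0, subr0).

(* Each proof below exhibits the difference of the two sides as a combination of
   the hypotheses, an identity of the free algebra checked by [nc_ring]/[nc_field]. *)

Lemma qcomm_sq0l f X a : a != 0 -> 1 + a ^+ 2 != 0 ->
  X * X = 0 -> serre (a + a^-1) f X = 0 -> qcomm a f X * qcomm a f X = 0.
Proof.
move=> a0 a2 XX S0; apply: subr0_eq.
transitivity ((a ^+ 3 / (1 + a ^+ 2)) *: (f * f * (X * X))
  - (a ^+ 3 / (1 + a ^+ 2)) *: (serre (a + a^-1) f X * X) - a *: (f * (X * X) * f)
  - (a / (1 + a ^+ 2)) *: (X * serre (a + a^-1) f X) + (a / (1 + a ^+ 2)) *: (X * X * f * f)).
  by rewrite /qcomm /serre; nc_field; rewrite ?a0 ?a2.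
by rewrite XX S0 !zeroE.
Qed.

Lemma qcomm_sq0r f X a : a != 0 -> 1 + a ^+ 2 != 0 ->
  X * X = 0 -> serre (a + a^-1) f X = 0 -> qcomm a X f * qcomm a X f = 0.
Proof.
move=> a0 a2 XX S0; apply: subr0_eq.
transitivity ((a / (1 + a ^+ 2)) *: (f * f * (X * X))
  - (a / (1 + a ^+ 2)) *: (serre (a + a^-1) f X * X) - a *: (f * (X * X) * f)
  - (a ^+ 3 / (1 + a ^+ 2)) *: (X * serre (a + a^-1) f X)
  + (a ^+ 3 / (1 + a ^+ 2)) *: (X * X * f * f)).
  by rewrite /qcomm /serre; nc_field; rewrite ?a0 ?a2.
by rewrite XX S0 !zeroE.
Qed.

Lemma comm_qcomm_qcomm g y b a : a != 0 -> 1 + a ^+ 2 != 0 ->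
  serre (a + a^-1) g y = 0 -> serre (a + a^-1) g b = 0 -> GRing.comm y b ->
  GRing.comm g (qcomm a (qcomm a y g) b).
Proof.
move=> a0 a2 Sy Sb yb; apply: subr0_eq.
transitivity ((a ^+ 3 / (1 + a ^+ 2)) *: (y * serre (a + a^-1) g b)
  - (a ^+ 3 / (1 + a ^+ 2)) *: (serre (a + a^-1) g y * b)
  - (a ^+ 3 / (1 + a ^+ 2)) *: ((y * b - b * y) * g * g) + a *: (g * (y * b - b * y) * g)
  - (a / (1 + a ^+ 2)) *: (g * g * (y * b - b * y))
  - (a / (1 + a ^+ 2)) *: (serre (a + a^-1) g b * y)
  + (a / (1 + a ^+ 2)) *: (b * serre (a + a^-1) g y)).
  by rewrite /qcomm /serre; nc_field; rewrite ?a0 ?a2.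
by rewrite Sy Sb yb subrr !zeroE.
Qed.

Lemma anticross_qcomm y X b a : a != 0 -> X * X = 0 ->
  X * qcomm a^-1 (qcomm a y X) b + qcomm a^-1 (qcomm a y X) b * X = 0 ->
  qcomm a y X * qcomm a^-1 X b + qcomm a^-1 X b * qcomm a y X =
    (a - a^-1) *: (X * qcomm a^-1 (qcomm a y X) b).
Proof.
move=> a0 XX T0; apply: subr0_eq.
transitivity (- a *: (X * qcomm a^-1 (qcomm a y X) b + qcomm a^-1 (qcomm a y X) b * X)
  + y * (X * X) * b - a ^+ 2 *: (b * y * (X * X)) + b * (X * X) * y
  - (a ^+ 2)^-1 *: (X * X * y * b)).
  by rewrite /qcomm; nc_field; rewrite ?a0.
by rewrite XX T0 !zeroE.
Qed.

Lemma qcommutes_qcommr e1 e2 c Z X Y :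
  qcommutes e1 Z X -> qcommutes e2 Z Y -> qcommutes (e1 * e2) Z (qcomm c X Y).
Proof.
move=> ZX ZY; apply: subr0_eq.
transitivity (- c *: ((Z * X - e1 *: (X * Z)) * Y) - (c * e1) *: (X * (Z * Y - e2 *: (Y * Z)))
  + (Z * Y - e2 *: (Y * Z)) * X + e2 *: (Y * (Z * X - e1 *: (X * Z)))).
  by rewrite /qcomm; nc_ring.
by rewrite ZX ZY !subrr !zeroE.
Qed.

Lemma qcommutes_qcomml e1 e2 c Z X Y :
  qcommutes e1 X Z -> qcommutes e2 Y Z -> qcommutes (e1 * e2) (qcomm c X Y) Z.
Proof.
move=> XZ YZ; apply: subr0_eq.
transitivity (- c *: (X * (Y * Z - e2 *: (Z * Y))) - (c * e2) *: ((X * Z - e1 *: (Z * X)) * Y)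
  + Y * (X * Z - e1 *: (Z * X)) + e1 *: ((Y * Z - e2 *: (Z * Y)) * X)).
  by rewrite /qcomm; nc_ring.
by rewrite XZ YZ !subrr !zeroE.
Qed.

Lemma comm_qcomm c Z X Y : GRing.comm Z X -> GRing.comm Z Y -> GRing.comm Z (qcomm c X Y).
Proof.
move=> ZX ZY; have := @qcommutes_qcommr 1 1 c Z X Y.
by rewrite /qcommutes mulr1 !scale1r; apply.
Qed.

Lemma serre_qcomml s c f X Y :
  serre s f X = 0 -> GRing.comm f Y -> serre s f (qcomm c X Y) = 0.
Proof.
move=> S0 fY.
transitivity (- c *: (serre s f X * Y + s *: (f * X * (f * Y - Y * f))
    - X * (f * Y - Y * f) * f - X * f * (f * Y - Y * f))
  + (Y * serre s f X + f * (f * Y - Y * f) * X + (f * Y - Y * f) * f * X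
    - s *: ((f * Y - Y * f) * X * f))).
  by rewrite /qcomm /serre; nc_ring.
by rewrite S0 fY subrr !zeroE.
Qed.

Lemma serre_qcommr s c f X Y :
  serre s f Y = 0 -> GRing.comm f X -> serre s f (qcomm c X Y) = 0.
Proof.
move=> S0 fX.
transitivity (- c *: (X * serre s f Y + f * (f * X - X * f) * Y + (f * X - X * f) * f * Y
    - s *: ((f * X - X * f) * Y * f))
  + (serre s f Y * X + s *: (f * Y * (f * X - X * f))
    - Y * (f * X - X * f) * f - Y * f * (f * X - X * f))).
  by rewrite /qcomm /serre; nc_ring.
by rewrite S0 fX subrr !zeroE.
Qed.

Lemma anticross_qcomml a k g G H X Y :
  GRing.comm g G -> GRing.comm g H -> X * G + G * X = k *: (H * Y) ->
  qcomm a g X * G + G * qcomm a g X = k *: (H * qcomm a g Y).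
Proof.
move=> gG gH XG; apply: subr0_eq.
transitivity (- a *: (g * (X * G + G * X - k *: (H * Y))) + a *: ((g * G - G * g) * X)
  - (a * k) *: ((g * H - H * g) * Y) + X * (g * G - G * g)
  + (X * G + G * X - k *: (H * Y)) * g).
  by rewrite /qcomm; nc_ring.
by rewrite gG gH XG !subrr !zeroE.
Qed.

Lemma anticross_qcommr a k f Z H X Y :
  GRing.comm Z f -> GRing.comm H f -> Z * X + X * Z = k *: (H * Y) ->
  Z * qcomm a X f + qcomm a X f * Z = k *: (H * qcomm a Y f).
Proof.
move=> Zf Hf ZX; apply: subr0_eq.
transitivity (- a *: ((Z * X + X * Z - k *: (H * Y)) * f) + a *: (X * (Z * f - f * Z))
  + (Z * f - f * Z) * X + f * (Z * X + X * Z - k *: (H * Y)) - k *: ((H * f - f * H) * Y)).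
  by rewrite /qcomm; nc_ring.
by rewrite Zf Hf ZX !subrr !zeroE.
Qed.

Lemma qcommA c d f X g : GRing.comm f g ->
  qcomm d (qcomm c f X) g = qcomm c f (qcomm d X g).
Proof.
move=> fg; apply: subr0_eq.
transitivity (- d *: (X * (f * g - g * f)) + c *: ((f * g - g * f) * X)).
  by rewrite /qcomm; nc_ring.
by rewrite fg subrr !zeroE.
Qed.

Lemma qcommutes_qcomm_sq0r a f X : X * X = 0 -> qcommutes (- a) X (qcomm a f X).
Proof.
move=> XX; apply: subr0_eq.
transitivity (X * X * f - a ^+ 2 *: (f * (X * X))).
  by rewrite /qcomm; nc_ring.
by rewrite XX !zeroE.
Qed.

Lemma qcommutes_qcomm_sq0l a f X : a != 0 -> X * X = 0 -> qcommutes (- a^-1) X (qcomm a X f).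
Proof.
move=> a0 XX; apply: subr0_eq.
transitivity (- a *: (X * X * f) + a^-1 *: (f * (X * X))).
  by rewrite /qcomm; nc_field; rewrite ?a0.
by rewrite XX !zeroE.
Qed.

End QCommutators.

Lemma prec_trans : transitive prec.
Proof. by move=> [a b] [c d] [e f]; rewrite /prec /=; lia. Qed.

Lemma prec_irr p : ~~ prec p p.
Proof. by case: p => a b; rewrite /prec /= ltnn eqxx ltnn. Qed.

Lemma I1seqS m n :
  I1seq m n.+1 = [seq (i, (m.+1 + n)%N) | i <- iota 1 m] ++ I1seq m n.
Proof. by rewrite /I1seq -[n.+1]addn1 iotaD rev_cat. Qed.

Lemma mem_I1seq m n p : (p \in I1seq m n) = I1 m n p.
Proof.
case: p => i j; rewrite /I1 /=; apply/flatten_mapP/idP => [[k] | ij].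
  by rewrite mem_rev mem_iota => kn /mapP[i' + [-> ->]]; rewrite mem_iota => hi; lia.
exists j; first by rewrite mem_rev mem_iota; lia.
by apply/mapP; exists i => //; rewrite mem_iota; lia.
Qed.

Lemma sorted_I1seq m n : sorted prec (I1seq m n).
Proof.
rewrite sorted_pairwise; last exact: prec_trans.
elim: n => [|n IH] //; rewrite I1seqS pairwise_cat IH andbT; apply/andP; split.
  apply/allrelP => _ p /mapP[i _ ->]; rewrite mem_I1seq.
  by case: p => j k; rewrite /I1 /prec /=; lia.
rewrite pairwise_map; apply: (@sub_pairwise _ ltn).
  by move=> i j; rewrite /prec /= ltnn eqxx.
by rewrite -sorted_pairwise ?iota_ltn_sorted //; exact: ltn_trans.
Qed.

Lemma down_ind j (P : nat -> Prop) :
  (forall i, ((i < j)%N -> P i.+1) -> P i) -> forall i, P i.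
Proof.
move=> IH i; move Dd: (j - i)%N => d.
by elim: d i Dd => [|d IHd] i Dd; apply: IH => ij; [lia | apply: IHd; lia].
Qed.

Lemma sqrD1V_neq0 (R : fieldType) (x : R) : x != 0 -> 1 + x ^+ 2 != 0 -> 1 + x^-1 ^+ 2 != 0.
Proof.
move=> x0 x2; have -> : 1 + x^-1 ^+ 2 = x^-1 ^+ 2 * (1 + x ^+ 2) by field.
by rewrite mulf_neq0 ?expf_neq0 ?invr_eq0.
Qed.

Lemma qq_neq0 : qq != 0.
Proof. by rewrite /qq tofrac_eq0 polyX_eq0. Qed.

Lemma sqrD1_qq_neq0 : 1 + qq ^+ 2 != 0.
Proof.
rewrite /qq -tofrac1 -tofracXn -tofracD tofrac_eq0.
apply/negP => /eqP /(congr1 (horner^~ 0)) /eqP.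
by rewrite !hornerE expr0n addr0 oner_eq0.
Qed.

Lemma qi_neq0 m c : qi m c != 0.
Proof. by rewrite /qi; case: ifP; rewrite ?invr_eq0 qq_neq0. Qed.

Lemma sqrD1_qi_neq0 m c : 1 + qi m c ^+ 2 != 0.
Proof.
rewrite /qi; case: ifP => _; first exact: sqrD1_qq_neq0.
exact: sqrD1V_neq0 qq_neq0 sqrD1_qq_neq0.
Qed.

Lemma qiDV m c : qi m c + (qi m c)^-1 = qq + qq^-1.
Proof. by rewrite /qi; case: ifP; rewrite ?invrK // addrC. Qed.

Lemma qi_le m c : (c <= m)%N -> qi m c = qq.
Proof. by rewrite /qi => ->. Qed.

Lemma qi_gt m c : (m < c)%N -> qi m c = qq^-1.
Proof. by move=> mc; rewrite /qi leqNgt mc. Qed.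

Lemma qi_succ m c : c != m -> qi m c.+1 = qi m c.
Proof. by rewrite /qi ltn_neqAle => ->. Qed.

Section OddRootVectors.
Variables (m n : nat) (A : algType Cq) (K Ki E F : nat -> A).
Hypothesis rels : Uq_rels m n K Ki E F.
Local Notation Fr := (Fij m F).
Local Notation N := (m + n)%N.

Lemma F_sq0 : F m * F m = 0.
Proof. by case: rels => _ [_ [_ [_ [[_ ->] _]]]]. Qed.

Lemma F_comm i j : (1 <= i < N)%N -> (1 <= j < N)%N -> (i.+1 < j)%N || (j.+1 < i)%N ->
  GRing.comm (F i) (F j).
Proof.
move=> hi hj ij; case: rels => _ [_ [_ [_ [_ [+ _]]]]] => /(_ i j hi hj) [|//].
by rewrite /dist; lia.
Qed.

Lemma F_serre i j : (1 <= i < N)%N -> (1 <= j < N)%N -> (i.+1 == j) || (j.+1 == i) ->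
  i != m -> serre (qq + qq^-1) (F i) (F j) = 0.
Proof.
move=> hi hj ij im; case: rels => _ [_ [_ [_ [_ [_ [+ _]]]]]] => /(_ i j hi hj _ im) [|//].
by rewrite /dist; lia.
Qed.

Lemma F_odd_serre : (1 < m)%N -> (1 < n)%N -> qcommutes (-1) (F m) (Fr m.-1 m.+2).
Proof.
move=> m1 n1; case: rels => _ [_ [_ [_ [_ [_ [_ /(_ m1 n1) [_ h]]]]]]].
by rewrite /qcommutes scaleN1r; apply/eqP; rewrite -addr_eq0 addrC h.
Qed.

Lemma Fij_succ i : Fr i i.+1 = F i.
Proof. by rewrite /Fij subSnn. Qed.

Lemma Fij_succr i j : (i < j)%N -> Fr i j.+1 = qcomm (qi m j) (Fr i j) (F j).
Proof.
move=> ij; rewrite /Fij (_ : j.+1 - i - 1 = (j - i - 1).+1)%N; last by lia.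
by rewrite /= (_ : i + (j - i - 1).+1 = j)%N 1?addrC //; lia.
Qed.

Lemma Fij_succl i j : (1 <= i)%N -> (i.+1 < j <= N)%N ->
  Fr i j = qcomm (qi m i.+1) (F i) (Fr i.+1 j).
Proof.
move=> hi; elim: j => // j IH hj.
have [-> | ij] : j = i.+1 \/ (i.+1 < j)%N by lia.
  by rewrite Fij_succr // !Fij_succ.
rewrite Fij_succr 1?IH 1?Fij_succr; try lia.
by apply: qcommA; apply: F_comm; lia.
Qed.

Lemma comm_F_Fij c i j : (1 <= c < N)%N -> (1 <= i)%N -> (i < j <= N)%N ->
  (c.+1 < i)%N || (j < c)%N -> GRing.comm (F c) (Fr i j).
Proof.
move=> hc hi; elim: j => // j IH hj hcj.
have [-> | ij] : j = i \/ (i < j)%N by lia.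
  by rewrite Fij_succ; apply: F_comm; lia.
by rewrite Fij_succr //; apply: comm_qcomm; [apply: IH | apply: F_comm]; lia.
Qed.

Lemma serre_F_Fijl c j : (1 <= c)%N -> c != m -> (c.+1 < j <= N)%N ->
  serre (qq + qq^-1) (F c) (Fr c.+1 j) = 0.
Proof.
move=> hc cm; elim: j => // j IH hj.
have [-> | cj] : j = c.+1 \/ (c.+1 < j)%N by lia.
  by rewrite Fij_succ; apply: F_serre; lia.
by rewrite Fij_succr //; apply: serre_qcomml; [apply: IH | apply: F_comm]; lia.
Qed.

Lemma serre_F_Fijr c i : (c < N)%N -> c != m -> (1 <= i < c)%N ->
  serre (qq + qq^-1) (F c) (Fr i c) = 0.
Proof.
move=> hc cm; elim/(@down_ind c): i => i IH hi.
have [ci | ic] : c = i.+1 \/ (i.+1 < c)%N by lia.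
  by rewrite ci Fij_succ -ci; apply: F_serre; lia.
rewrite Fij_succl; [|lia..].
by apply: serre_qcommr; [apply: IH | apply: F_comm]; lia.
Qed.

Lemma Fij_sq0 i k : (1 <= i <= m)%N -> (m < k <= N)%N -> Fr i k * Fr i k = 0.
Proof.
move=> hi; elim: k => // k IH hk.
have [{IH}-> | mk] : k = m \/ (m < k)%N by lia.
  elim/(@down_ind m): i hi => i IHi hi.
  have [{IHi}-> | im] : i = m \/ (i < m)%N by lia.
    by rewrite Fij_succ F_sq0.
  rewrite Fij_succl; [|lia..].
  apply: qcomm_sq0l; rewrite ?qi_neq0 ?sqrD1_qi_neq0 ?qiDV //; first by apply: IHi; lia.
  by apply: serre_F_Fijl; lia.
rewrite Fij_succr; [|lia].
apply: qcomm_sq0r; rewrite ?qi_neq0 ?sqrD1_qi_neq0 ?qiDV //; first by apply: IH; lia.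
by apply: serre_F_Fijr; lia.
Qed.

Lemma Fij_qcommutes_col i s k : (1 <= i)%N -> (i < s <= m)%N -> (m < k <= N)%N ->
  qcommutes (- qq) (Fr s k) (Fr i k).
Proof.
move=> + /andP[+ sm] hk; elim/(@down_ind s): i => i IH hi his.
rewrite [Fr i k]Fij_succl; [|lia..].
have [<- | si] : s = i.+1 \/ (i.+1 < s)%N by lia.
  by rewrite qi_le //; apply: qcommutes_qcomm_sq0r; apply: Fij_sq0; lia.
rewrite -[- qq]mul1r; apply: qcommutes_qcommr; last by apply: IH; lia.
by rewrite /qcommutes scale1r; apply/commr_sym/comm_F_Fij; lia.
Qed.

Lemma Fij_qcommutes_row i t k : (1 <= i <= m)%N -> (m < t)%N -> (t < k <= N)%N ->
  qcommutes (- qq) (Fr i t) (Fr i k).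
Proof.
move=> hi mt; elim: k => // k IH hk.
rewrite Fij_succr; [|lia].
have [{IH}-> | tk] : k = t \/ (t < k)%N by lia.
  by rewrite qi_gt // -[qq in - qq]invrK; apply: qcommutes_qcomm_sq0l;
    [rewrite invr_eq0 qq_neq0 | apply: Fij_sq0; lia].
rewrite -[- qq]mulr1; apply: qcommutes_qcommr; first by apply: IH; lia.
by rewrite /qcommutes scale1r; apply/commr_sym/comm_F_Fij; lia.
Qed.

Lemma F_Fij_inner c i k : (1 <= i < c)%N -> (c.+1 < k <= N)%N ->
  qcommutes ((-1) ^+ (c == m)) (F c) (Fr i k).
Proof.
case: c => [|c] hi hk; first by lia.
have base : qcommutes ((-1) ^+ (c.+1 == m)) (F c.+1) (Fr c c.+3).
  have [cm | cm] := eqVneq c.+1 m.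
    by rewrite cm expr1 (_ : c = m.-1); [apply: F_odd_serre | ]; lia.
  rewrite expr0 /qcommutes scale1r Fij_succr // Fij_succr // Fij_succ qi_succ //.
  apply: comm_qcomm_qcomm; rewrite ?qi_neq0 ?sqrD1_qi_neq0 ?qiDV //; last by apply: F_comm; lia.
    by apply: F_serre; lia.
  by apply: F_serre; lia.
have inner_c k' : (c.+2 < k' <= N)%N -> qcommutes ((-1) ^+ (c.+1 == m)) (F c.+1) (Fr c k').
  elim: k' => // k' IH hk'.
  have [{IH}-> // | ck] : k' = c.+2 \/ (c.+2 < k')%N by lia.
  rewrite Fij_succr; [|lia]; rewrite -[_ ^+ _]mulr1.
  apply: qcommutes_qcommr; first by apply: IH; lia.
  by rewrite /qcommutes scale1r; apply: F_comm; lia.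
elim/(@down_ind c): i hi => i IH hi.
have [ic | ic] : i = c \/ (i < c)%N by lia.
  by rewrite ic; apply: inner_c; lia.
rewrite Fij_succl; [|lia..]; rewrite -[_ ^+ _]mul1r.
apply: qcommutes_qcommr; last by apply: IH; lia.
by rewrite /qcommutes scale1r; apply: F_comm; lia.
Qed.

Lemma Fij_inner i s t k : (1 <= i < s)%N -> (s < t)%N -> (t < k <= N)%N ->
  qcommutes ((-1) ^+ ((s <= m)%N && (m < t)%N)) (Fr s t) (Fr i k).
Proof.
move=> hi; elim: t => // t IH st hk.
have [{IH}-> | st'] : t = s \/ (s < t)%N by lia.
  rewrite Fij_succ (_ : (s <= m)%N && (m < s.+1)%N = (s == m)); last by rewrite ltnS -eqn_leq.
  by apply: F_Fij_inner; lia.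
have -> : (s <= m)%N && (m < t.+1)%N = ((s <= m)%N && (m < t)%N) (+) (t == m).
  by case: (ltngtP t m) => [tm | mt | <-]; rewrite ?addbF ?addbT ?(ltnW st') //; lia.
rewrite signr_addb Fij_succr //.
by apply: qcommutes_qcomml; [apply: IH | apply: F_Fij_inner]; lia.
Qed.

Lemma Fij_qcommutes_nested i s t k : (1 <= i < s)%N -> (s <= m < t)%N -> (t < k <= N)%N ->
  qcommutes (-1) (Fr s t) (Fr i k).
Proof.
move=> hi /andP[sm mt] hk; have := @Fij_inner i s t k.
by rewrite sm mt /= expr1; apply; lia.
Qed.

Lemma Fij_anticross_succ s t k : (1 <= s)%N -> (s < m < t)%N -> (t < k <= N)%N ->
  Fr s t * Fr s.+1 k + Fr s.+1 k * Fr s t = (qq - qq^-1) *: (Fr s.+1 t * Fr s k).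
Proof.
move=> hs /andP[sm mt]; elim: k => // k IH hk.
have [{IH}-> | tk] : k = t \/ (t < k)%N by lia.
  have XX : Fr s.+1 t * Fr s.+1 t = 0 by apply: Fij_sq0; lia.
  have : Fr s.+1 t * Fr s t.+1 + Fr s t.+1 * Fr s.+1 t = 0.
    rewrite (@Fij_qcommutes_nested s s.+1 t t.+1) ?scaleN1r ?addNr //; lia.
  rewrite !Fij_succr; [|lia..]; rewrite [Fr s t]Fij_succl; [|lia..].
  rewrite qi_gt // qi_le //; exact: anticross_qcomm qq_neq0 XX.
rewrite !Fij_succr; [|lia..].
apply: anticross_qcommr; last by apply: IH; lia.
  by apply/commr_sym/comm_F_Fij; lia.
by apply/commr_sym/comm_F_Fij; lia.
Qed.

Lemma Fij_anticross s i t k : (1 <= s < i)%N -> (i <= m < t)%N -> (t < k <= N)%N ->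
  Fr s t * Fr i k + Fr i k * Fr s t = (qq - qq^-1) *: (Fr i t * Fr s k).
Proof.
move=> + /andP[im mt] hk; elim/(@down_ind i): s => s IH /andP[hs si].
have [ei | si'] : i = s.+1 \/ (s.+1 < i)%N by lia.
  by rewrite ei; apply: Fij_anticross_succ; lia.
rewrite [Fr s t]Fij_succl; [|lia..]; rewrite [Fr s k]Fij_succl; [|lia..].
by apply: anticross_qcomml; [apply: comm_F_Fij | apply: comm_F_Fij | apply: IH]; lia.
Qed.

Lemma Fij_mul_reduce i k s t : I1 m n (i, k) -> I1 m n (s, t) -> prec (i, k) (s, t) ->
  exists x y, Fr s t * Fr i k = x * Fr s t + y * Fr i t /\ ((t < k)%N \/ y = 0).
Proof.
rewrite /I1 /prec /= => hik hst hp.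
have qcommutes_case e (b : bool) : qcommutes e (Fr s t) (Fr i k) ->
    exists x y, Fr s t * Fr i k = x * Fr s t + y * Fr i t /\ (b \/ y = 0).
  by move=> h; exists (e *: Fr i k), 0; rewrite h scalerAl mul0r addr0; split; last right.
case: (ltngtP t k) => [tk | kt | tk]; last first.
- apply: qcommutes_case; rewrite tk; move: hp; rewrite tk ltnn eqxx /= => hp.
  by apply: Fij_qcommutes_col; lia.
- by move: hp; rewrite ltnNge (ltnW kt) /=; lia.
case: (ltngtP s i) => [si | is_ | si]; last first.
- by apply: qcommutes_case; rewrite si; apply: Fij_qcommutes_row; lia.
- by apply: qcommutes_case; apply: Fij_qcommutes_nested; lia.
exists (- Fr i k), (- ((qq - qq^-1) *: Fr s k)); split; last by left.
have anti : Fr s t * Fr i k + Fr i k * Fr s t = (qq - qq^-1) *: (Fr i t * Fr s k).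
  by apply: Fij_anticross; lia.
rewrite (@Fij_qcommutes_nested s i t k) in anti; [|lia..].
rewrite -(addrK (Fr i k * Fr s t) (Fr s t * Fr i k)) anti.
by rewrite scaleN1r scalerN !mulNr -scalerAl addrC.
Qed.

Lemma Fij_mul_prod_eq0 (l : seq (nat * nat)) :
  all (I1 m n) l -> sorted prec l ->
  {in l, forall v u, I1 m n u -> prec v u -> u \in l} ->
  {in l, forall r, Fr r.1 r.2 * \prod_(p <- l) Fr p.1 p.2 = 0}.
Proof.
elim: l => [|[i k] l IH] //= /andP[Iik Il] sorted_l closed_l [s t].
have above : all (prec (i, k)) l := order_path_min prec_trans sorted_l.
have closed_l' : {in l, forall v u, I1 m n u -> prec v u -> u \in l}.
  move=> v vl u Iu vu; move: (closed_l v); rewrite inE vl orbT => /(_ isT u Iu vu).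
  rewrite inE => /orP[/eqP uik | //]; have := prec_trans (allP above v vl) vu.
  by rewrite uik (negbTE (prec_irr _)).
have {}IH := IH Il (path_sorted sorted_l) closed_l'.
rewrite big_cons inE mulrA => /orP[/eqP [-> ->] | stl].
  by move: Iik; rewrite /I1 /= => Iik; rewrite Fij_sq0 ?mul0r //; lia.
have [x [y [-> [tk | ->]]]] := Fij_mul_reduce Iik (allP Il _ stl) (allP above _ stl); last first.
  by rewrite mul0r addr0 -mulrA (IH _ stl) mulr0.
have itl : (i, t) \in l.
  have Iit : I1 m n (i, t) by move: Iik (allP Il _ stl); rewrite /I1 /=; lia.
  have := closed_l (i, k) (mem_head _ _) (i, t) Iit; rewrite /prec /= tk => /(_ isT).
  by rewrite inE xpair_eqE (ltn_eqF tk) andbF.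
by rewrite mulrDl -!mulrA (IH _ stl) (IH _ itl) !mulr0 addr0.
Qed.

Lemma Fij_mul_Fprod_eq0 (P : pred (nat * nat)) s t :
  (forall v u, P v -> prec v u -> P u) -> I1 m n (s, t) -> P (s, t) ->
  Fr s t * Fprod m n F P = 0.
Proof.
move=> Pup Ist Pst; rewrite /Fprod -big_filter.
apply: (@Fij_mul_prod_eq0 _ _ _ _ (s, t)).
- by apply/allP => u; rewrite mem_filter mem_I1seq => /andP[_ ->].
- by apply: sorted_filter; [exact: prec_trans | exact: sorted_I1seq].
- move=> v; rewrite !mem_filter !mem_I1seq => /andP[Pv _] u Iu vu.
  by rewrite mem_filter mem_I1seq Iu (Pup v u).
- by rewrite mem_filter mem_I1seq Pst.
Qed.

End OddRootVectors.

Theorem lemma5p2 (m n : nat) (hm : (0 < m)%N) (hn : (0 < n)%N)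
    (A : algType Cq) (K Ki E F : nat -> A) :
  Uq_rels m n K Ki E F ->
  forall i k : nat, I1 m n (i, k) ->
    (forall s t : nat, I1 m n (s, t) -> preceq (i, k) (s, t) ->
       Fij m F s t * Fge m n F (i, k) = 0) /\
    (forall s t : nat, I1 m n (s, t) -> prec (i, k) (s, t) ->
       Fij m F s t * Fgt m n F (i, k) = 0).
Proof.
move=> rels i k _; split=> s t Ist ikst; apply: (Fij_mul_Fprod_eq0 rels) => // v u.
  by move=> /orP[/eqP <- | ikv] vu; apply/orP; right; last exact: prec_trans ikv vu.
exact: prec_trans.
Qed.
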